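(* Let $\mu\in\mathbb F_q\setminus\{0\}$. If $g$ is a generator of $\mathcal W_0$ such that $g\cap\Delta$ is an $(n-2)$-space, then $g\cap\mathcal Q_\mu$ is a cone whose vertex is an $(n-3)$-space (empty if $n=2$) and whose base is a non-degenerate conic.
   Context: Let $q$ be an even prime power and $n\ge 2$ an integer. Let $\mathrm{PG}(2n+1,q)$ have homogeneous coordinates $(X_1,\dots,X_{2n+2})$. Fix $\delta\in\mathbb F_q$ such that $X^2+X+\delta$ is irreducible over $\mathbb F_q$. For $\mu\in\mathbb F_q$ let $\mathcal Q_\mu$ be the quadric $X_1^2+X_1X_{2n+2}+\delta X_{2n+2}^2+\sum_{i=2}^{n+1}X_iX_{2n+3-i}+\mu(X_{2n}^2+X_{2n}X_{2n+1}+\delta X_{2n+1}^2)=0$ (an elliptic quadric $\mathcal Q^-(2n+1,q)$), and $\perp_\mu$ the symplectic polarity defined by the alternating form $B_\mu(X,Y)=\sum_{i=1}^{2n+2}X_iY_{2n+3-i}+\mu(X_{2n}Y_{2n+1}+X_{2n+1}Y_{2n})$ (the polarity associated with $\mathcal Q_\mu$). Let $\mathcal W_\mu$ be the associated symplectic polar space; its generators are the totally isotropic $n$-spaces. Let $\Delta$ be the $(2n-1)$-space $X_{2n}=X_{2n+1}=0$. A $(-1)$-space is the empty set. *)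

From HB Require Import structures.
From mathcomp Require Import all_boot all_order all_algebra.
Set Implicit Arguments. Unset Strict Implicit. Unset Printing Implicit Defensive.
Import GRing.Theory.
Local Open Scope ring_scope.

(* Vectors of F^(2n+2) are row vectors 'rV[F]_(n.*2.+2);
   the paper's coordinate X_i (1 <= i <= 2n+2) is stored at index i-1. *)
Definition Xc (F : fieldType) (n : nat) (x : 'rV[F]_(n.*2.+2)) (i : nat) : F :=
  x 0 (inord i.-1).

Definition Qform (F : fieldType) (n : nat) (delta mu : F)
    (x : 'rV[F]_(n.*2.+2)) : F :=
  let X := Xc x in
  X 1%N ^+ 2 + X 1%N * X (n.*2.+2) + delta * X (n.*2.+2) ^+ 2
  + \sum_(2 <= i < n.+2) X i * X (n.*2.+3 - i)%N
  + mu * (X (n.*2) ^+ 2 + X (n.*2) * X (n.*2.+1) + delta * X (n.*2.+1) ^+ 2).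
Arguments Qform {F} n delta mu x.

Definition Bform (F : fieldType) (n : nat) (mu : F)
    (x y : 'rV[F]_(n.*2.+2)) : F :=
  \sum_(1 <= i < n.*2.+3) Xc x i * Xc y (n.*2.+3 - i)%N
  + mu * (Xc x (n.*2) * Xc y (n.*2.+1) + Xc x (n.*2.+1) * Xc y (n.*2)).
Arguments Bform {F} n mu x y.

(* Generators of W_mu: totally isotropic n-spaces, i.e. (n+1)-dimensional
   vector subspaces on which B_mu vanishes identically. *)
Definition is_generator (F : fieldType) (n : nat) (mu : F)
    (g : {vspace 'rV[F]_(n.*2.+2)}) : Prop :=
  \dim g = n.+1 /\ (forall x y, x \in g -> y \in g -> Bform n mu x y = 0).
Arguments is_generator {F} n mu g.

(* Delta : X_{2n} = X_{2n+1} = 0, spanned by the remaining unit vectors. *)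
Definition Delta (F : fieldType) (n : nat) : {vspace 'rV[F]_(n.*2.+2)} :=
  <<[seq delta_mx (0%R : 'I_1) j | j <- enum 'I_(n.*2.+2) &
       (val j != (n.*2).-1) && (val j != n.*2)]>>%VS.
Arguments Delta F n.

Definition polarQ (F : fieldType) (m : nat) (Q : 'rV[F]_m -> F) (x y : 'rV[F]_m) : F :=
  Q (x + y) - Q x - Q y.

(* The zero set of Q in the plane pi (vector dim 3) is a non-degenerate conic:
   Q restricted to pi is a non-singular quadratic form. *)
Definition nondeg_conic_in (F : fieldType) (m : nat) (Q : 'rV[F]_m -> F)
    (pi : {vspace 'rV[F]_m}) : Prop :=
  \dim pi = 3 /\
  (forall c, c \in pi -> Q c = 0 -> (forall d, d \in pi -> polarQ Q c d = 0) -> c = 0).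

(* The zero set of Q in g is a cone with vertex V (a vector subspace, the
   projective (dim V - 1)-space) and base the conic Q = 0 in the plane pi,
   where g = V (+) pi. *)
Definition is_cone_in (F : fieldType) (m : nat) (Q : 'rV[F]_m -> F)
    (g V pi : {vspace 'rV[F]_m}) : Prop :=
  directv (V + pi) /\ (V + pi)%VS = g /\
  (forall x, x \in g ->
     (Q x = 0 <-> exists v c, [/\ v \in V, c \in pi, Q c = 0 & x = v + c])).

From HB Require Import structures.
From mathcomp Require Import all_boot all_order all_algebra.
From mathcomp Require Import zify ring.
Import GRing.Theory.
Local Open Scope ring_scope.
Set Implicit Arguments. Unset Strict Implicit. Unset Printing Implicit Defensive.

(* Write K := g :&: Delta (dimension n-1).  Since g is totally isotropic for B_0, which is
   the polar form of Q_0 in characteristic 2, Q_0 restricted to g is additive and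
   Frobenius-semilinear.  It does not vanish on K: otherwise K plus the totally singular
   line <e_2, e_3> would be a totally singular (n+1)-space of the elliptic quadric Q_0,
   whose Witt index is n.  Over a finite field squaring is onto, so the zeros of Q_0 in K
   form a hyperplane V of K, of dimension n-2, complementary to some u in K.  Choosing
   p, r in g with (X_2n, X_2n+1) equal to (1,0) and (0,1), g = V (+) <u, p, r>.  On g,
   Q_mu differs from Q_0 by mu times a form in (X_2n, X_2n+1) that vanishes on V, so V is
   contained in the radical of Q_mu on g, and on the plane <u, p, r> the polar form of
   Q_mu is mu (X_2n Y_2n+1 + X_2n+1 Y_2n), whose radical <u> is anisotropic. *)

Lemma irreducible_norm_eq0 (F : fieldType) (delta a b : F) :
  irreducible_poly ('X^2 + 'X + delta%:P : {poly F}) ->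
  a ^+ 2 + a * b + delta * b ^+ 2 = 0 -> a = 0 /\ b = 0.
Proof.
move=> irr_p nab; have [b0|bn0] := eqVneq b 0.
  by move: nab; rewrite b0 expr0n /= !mulr0 !addr0 => /eqP; rewrite sqrf_eq0 => /eqP.
have root_ab : root ('X^2 + 'X + delta%:P) (a / b).
  rewrite /root !hornerE (_ : _ + _ = (a ^+ 2 + a * b + delta * b ^+ 2) / b ^+ 2).
    by rewrite nab mul0r.
  by field.
have /eqp_size : 'X - (a / b)%:P %= 'X^2 + 'X + delta%:P.
  by apply: (apply_irredp irr_p); rewrite ?size_XsubC ?dvdp_XsubCl.
by rewrite size_XsubC -addrA size_polyDl ?size_polyXn // size_XaddC.
Qed.

Lemma finField_pchar2_sqrt (F : finFieldType) (c : F) :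
  (2 \in [pchar F])%N -> exists r : F, r ^+ 2 = c.
Proof.
move=> hchar; have sq_inj : injective (pFrobenius_aut hchar) := fmorph_inj _.
by exists (finv (pFrobenius_aut hchar) c); rewrite -pFrobenius_autE f_finv.
Qed.

Lemma span_ind (K : fieldType) (vT : vectType K) (P : vT -> Prop) (X : seq vT) :
  P 0 -> (forall x y, P x -> P y -> P (x + y)) -> (forall c x, P x -> P (c *: x)) ->
  {in X, forall x, P x} -> forall v, v \in <<X>>%VS -> P v.
Proof.
move=> P0 PD PZ PX v /(@coord_span _ _ _ (in_tuple X)) ->.
by apply: (big_ind P) => // i _; apply/PZ/PX/mem_nth.
Qed.

Lemma span3P (K : fieldType) (vT : vectType K) (a b c v : vT) :
  reflect (exists x y z, v = x *: a + y *: b + z *: c) (v \in <<[:: a; b; c]>>%VS).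
Proof.
rewrite !span_cons span_nil addv0.
apply: (iffP memv_addP) => [|[x [y [z ->]]]].
  case=> _ /vlineP[x ->] [_ /memv_addP[_ /vlineP[y ->] [_ /vlineP[z ->] ->]] ->].
  by exists x, y, z; rewrite addrA.
exists (x *: a); first exact/memvZ/memv_line.
by exists (y *: b + z *: c); rewrite ?addrA // memv_add // memvZ // memv_line.
Qed.

Lemma dimv_orthogonal (F : fieldType) m (X Y : {vspace 'rV[F]_m}) :
  (forall x y, x \in X -> y \in Y -> \sum_(j < m) x 0 j * y 0 j = 0) ->
  (\dim X + \dim Y <= m)%N.
Proof.
move=> XY; set k := \dim X; set b := vbasis X.
pose T : 'Hom('rV[F]_m, 'rV[F]_k) := linfun (mulmxr (\matrix_(j, i) b`_i 0 j)).
have TE v (i : 'I_k) : T v 0 i = \sum_j v 0 j * b`_i 0 j.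
  by rewrite lfunE /= mxE; apply: eq_bigr => j _; rewrite mxE.
have bX (i : 'I_k) : b`_i \in X by apply/vbasis_mem/mem_nth; rewrite size_tuple.
have Y_ker : (Y <= lker T)%VS.
  apply/subvP => y yY; rewrite memv_ker; apply/eqP/rowP => i.
  rewrite TE mxE; apply: etrans (XY _ _ (bX i) yY).
  by apply: eq_bigr => j _; rewrite mulrC.
have free_b : free b := basis_free (vbasisP X).
(* The preimage of c is built from the coordinates of the unit vectors in the basis b. *)
have T_onto : limg T = fullv.
  apply/vspaceP => c; rewrite memvf; apply/memv_imgP.
  exists (\row_j \sum_i c 0 i * coord b i (delta_mx 0 j)); rewrite ?memvf //.
  apply/rowP => l; rewrite TE.
  under eq_bigr do rewrite mxE mulr_suml.
  rewrite exchange_big /=.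
  rewrite (eq_bigr (fun i => c 0 i * coord b i b`_l)) => [|i _]; last first.
    rewrite [in RHS](row_sum_delta b`_l) linear_sum mulr_sumr.
    by apply: eq_bigr => j _; rewrite linearZ /=; ring.
  rewrite (bigD1 l) //= coord_free // eqxx mulr1 big1 ?addr0 // => i il.
  by rewrite coord_free // eq_sym (negbTE il) mulr0.
have := limg_ker_dim T fullv; rewrite capfv T_onto !dimvf !dim_matrix !mul1r => dim_ker.
by apply: leq_trans (_ : k + \dim (lker T) <= m)%N; rewrite ?leq_add2l ?dimvS // addnC dim_ker.
Qed.

Section Coordinates.
Variables (F : fieldType) (n : nat).
Implicit Types (x y : 'rV[F]_(n.*2.+2)) (c : F).

Lemma XcD x y i : Xc (x + y) i = Xc x i + Xc y i.
Proof. by rewrite /Xc mxE. Qed.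

Lemma XcZ c x i : Xc (c *: x) i = c * Xc x i.
Proof. by rewrite /Xc mxE. Qed.

Lemma XcN x i : Xc (- x) i = - Xc x i.
Proof. by rewrite /Xc mxE. Qed.

Lemma Xc0 i : Xc (0 : 'rV[F]_(n.*2.+2)) i = 0.
Proof. by rewrite /Xc mxE. Qed.

Lemma Xc_inj x y : (forall i, (0 < i <= n.*2.+2)%N -> Xc x i = Xc y i) -> x = y.
Proof. by move=> xy; apply/rowP => k; have := xy k.+1; rewrite /Xc /= inord_val => ->. Qed.

Definition unitv i : 'rV[F]_(n.*2.+2) := delta_mx 0 (inord i.-1).

Lemma Xc_unitv i j : (0 < i <= n.*2.+2)%N -> (0 < j <= n.*2.+2)%N ->
  Xc (unitv i) j = (i == j)%:R.
Proof.
move=> hi hj; rewrite /Xc mxE eqxx /= eq_sym.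
have [->|ij] := eqVneq i j; first by rewrite eqxx.
by rewrite (_ : (_ == _) = false) //; apply/eqP => /(congr1 val) /=; rewrite !inordK; lia.
Qed.

Lemma unitv_neq0 i : (0 < i <= n.*2.+2)%N -> unitv i != 0.
Proof.
move=> hi; apply/eqP => /(congr1 (fun x => Xc x i)).
by rewrite Xc_unitv // eqxx Xc0 => /eqP; rewrite oner_eq0.
Qed.

Lemma dim_unitv_pair i j : (0 < i <= n.*2.+2)%N -> (0 < j <= n.*2.+2)%N -> i != j ->
  \dim (<[unitv i]> + <[unitv j]>) = 2%N.
Proof.
move=> hi hj ij; have := dimv_sum_cap <[unitv i]> <[unitv j]>.
rewrite !dim_vline !unitv_neq0 //.
suff -> : (<[unitv i]> :&: <[unitv j]> = 0)%VS by rewrite dimv0 addn0.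
apply/eqP; rewrite -subv0; apply/subvP => x; rewrite memv_cap memv0.
case/andP => /vlineP[a ->] /vlineP[b /(congr1 (fun x => Xc x i))].
by rewrite !XcZ !Xc_unitv // eqxx eq_sym (negbTE ij) mulr1 mulr0 => ->; rewrite scale0r.
Qed.

Lemma Bform0E x y : Bform n 0 x y = \sum_(k < n.*2.+2) x 0 k * y 0 (rev_ord k).
Proof.
rewrite /Bform mul0r addr0 big_add1 /= big_mkord.
apply: eq_bigr => i _; rewrite /Xc /= inord_val.
by congr (_ * y 0 _); apply: val_inj; rewrite /= inordK; lia.
Qed.

Lemma Bform0C x y : Bform n 0 x y = Bform n 0 y x.
Proof.
rewrite !Bform0E (reindex_inj rev_ord_inj) /=.
by apply: eq_bigr => k _; rewrite rev_ordK mulrC.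
Qed.

Lemma Bform0Dl x y z : Bform n 0 (x + y) z = Bform n 0 x z + Bform n 0 y z.
Proof. by rewrite !Bform0E -big_split; apply: eq_bigr => i _; rewrite mxE mulrDl. Qed.

Lemma Bform0Zl c x y : Bform n 0 (c *: x) y = c * Bform n 0 x y.
Proof. by rewrite !Bform0E mulr_sumr; apply: eq_bigr => i _; rewrite mxE mulrA. Qed.

Lemma Bform0_unitvl i y : (0 < i <= n.*2.+2)%N ->
  Bform n 0 (unitv i) y = Xc y (n.*2.+3 - i).
Proof.
move=> hi; rewrite Bform0E (bigD1 (inord i.-1)) //= big1 ?addr0.
  rewrite mxE !eqxx mul1r /Xc; congr (y 0 _); apply: val_inj; rewrite /= !inordK; lia.
by move=> k hk; rewrite mxE (negbTE hk) andbF mul0r.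
Qed.

Lemma Bform0_hyperbolic x y :
  Bform n 0 x y = Xc x 1 * Xc y (n.*2.+2) + Xc x (n.*2.+2) * Xc y 1 +
   \sum_(2 <= i < n.+2) (Xc x i * Xc y (n.*2.+3 - i) + Xc y i * Xc x (n.*2.+3 - i)).
Proof.
rewrite /Bform mul0r addr0 big_ltn // big_nat_recr /=; last by lia.
rewrite (@big_cat_nat _ _ _ n.+2) /=; [|lia|lia].
rewrite big_split /=.
have -> : \sum_(n.+2 <= i < n.*2.+2) Xc x i * Xc y (n.*2.+3 - i) =
    \sum_(2 <= i < n.+2) Xc y i * Xc x (n.*2.+3 - i).
  rewrite big_nat_rev /= -{1}(add2n n) big_addn.
  have -> : (n.*2.+2 - n = 2 + n)%N by lia.
  apply: eq_big_nat => i /andP[hi1 hi2].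
  by rewrite mulrC; congr (_ * _); apply: congr1; lia.
rewrite subSnn subn1 /=; ring.
Qed.

Lemma BformE mu x y : Bform n mu x y = Bform n 0 x y +
    mu * (Xc x (n.*2) * Xc y (n.*2.+1) + Xc x (n.*2.+1) * Xc y (n.*2)).
Proof. by rewrite /Bform mul0r addr0. Qed.

Lemma QformE delta mu x : Qform n delta mu x = Qform n delta 0 x +
    mu * (Xc x (n.*2) ^+ 2 + Xc x (n.*2) * Xc x (n.*2.+1) + delta * Xc x (n.*2.+1) ^+ 2).
Proof. by rewrite /Qform mul0r addr0. Qed.

Lemma QformZ delta mu c x : Qform n delta mu (c *: x) = c ^+ 2 * Qform n delta mu x.
Proof.
rewrite /Qform !XcZ.
have -> : \sum_(2 <= i < n.+2) Xc (c *: x) i * Xc (c *: x) (n.*2.+3 - i) =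
   c ^+ 2 * \sum_(2 <= i < n.+2) Xc x i * Xc x (n.*2.+3 - i).
  by rewrite mulr_sumr; apply: eq_bigr => i _; rewrite !XcZ; ring.
ring.
Qed.

Lemma Qform0 (delta mu : F) : Qform n delta mu 0 = 0.
Proof. by rewrite -(scale0r 0) QformZ expr0n mul0r. Qed.

Lemma Qform0_unitv (delta : F) i : (1 < i <= n.*2.+1)%N ->
  Qform n delta 0 (unitv i) = 0.
Proof.
move=> hi; have eX j : (0 < j <= n.*2.+2)%N -> Xc (unitv i) j = (i == j)%:R.
  by apply: Xc_unitv; lia.
have [i1 i2n] : i != 1%N /\ i != n.*2.+2 by split; apply/eqP; lia.
rewrite /Qform mul0r addr0 !eX //; last by lia.
rewrite (negbTE i1) (negbTE i2n) mul0r expr0n /= mulr0 !addr0 big_nat_cond big1 ?addr0 //.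
move=> j /andP[/andP[j1 j2] _].
rewrite !eX; try lia.
have [<-|] := eqVneq i j; last by rewrite mul0r.
have /negbTE -> : i != (n.*2.+3 - i)%N by apply/eqP; lia.
by rewrite mulr0.
Qed.

Hypothesis hchar : (2 \in [pchar F])%N.

Lemma QformD delta mu x y :
  Qform n delta mu (x + y) = Qform n delta mu x + Qform n delta mu y + Bform n mu x y.
Proof.
have sqrD (a b : F) : (a + b) ^+ 2 = a ^+ 2 + b ^+ 2.
  by rewrite sqrrD mulr2n addrr_pchar2 // addr0.
rewrite BformE Bform0_hyperbolic /Qform !XcD !sqrD.
have -> : \sum_(2 <= i < n.+2) Xc (x + y) i * Xc (x + y) (n.*2.+3 - i)
  = \sum_(2 <= i < n.+2) Xc x i * Xc x (n.*2.+3 - i)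
    + \sum_(2 <= i < n.+2) Xc y i * Xc y (n.*2.+3 - i)
    + \sum_(2 <= i < n.+2) (Xc x i * Xc y (n.*2.+3 - i) + Xc y i * Xc x (n.*2.+3 - i)).
  by rewrite -!big_split; apply: eq_bigr => i _ /=; rewrite !XcD; ring.
ring.
Qed.

End Coordinates.

Section WittIndex.
Variables (F : fieldType) (n : nat) (delta : F).
Hypotheses (hchar : (2 \in [pchar F])%N)
           (hdelta : irreducible_poly ('X^2 + 'X + delta%:P : {poly F})).
Implicit Types (x t a : 'rV[F]_(n.*2.+2)) (T : {vspace 'rV[F]_(n.*2.+2)}).

Lemma Qform0_head_eq0 a : Qform n delta 0 a = 0 ->
    (forall i, (1 < i < n.+2)%N -> Xc a i = 0) -> Xc a 1 = 0 /\ Xc a (n.*2.+2) = 0.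
Proof.
move=> Qa a_mid; apply: (irreducible_norm_eq0 hdelta).
move: Qa; rewrite /Qform mul0r addr0 big_nat_cond big1 ?addr0 //.
by move=> i /andP[/andP[i1 i2] _]; rewrite a_mid ?mul0r // i1 i2.
Qed.

Lemma Bform0_tail t a : (forall i, (0 < i < n.+2)%N -> Xc a i = 0) -> Xc a (n.*2.+2) = 0 ->
  Bform n 0 t a = \sum_(j < n) Xc t j.+2 * Xc a (n.*2.+1 - j).
Proof.
move=> a_head a_last; rewrite Bform0_hyperbolic a_last (a_head 1%N) // !mulr0 !add0r.
rewrite -{1}(add0n 2%N) big_addn subn2 big_mkord.
apply: eq_bigr => j _; rewrite (a_head (j + 2)%N) ?mul0r ?addr0; last by have := ltn_ord j; lia.
by rewrite addn2; congr (_ * Xc a _); lia.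
Qed.

(* The vectors of T vanishing on X_2..X_n+1 are, by anisotropy of (X_1, X_2n+2), supported
   on X_n+2..X_2n+1, which B_0 pairs perfectly with X_2..X_n+1. *)
Lemma totally_singular_dim_le T : {in T, forall t, Qform n delta 0 t = 0} -> (\dim T <= n)%N.
Proof.
move=> T_sing.
pose hd : 'Hom('rV[F]_(n.*2.+2), 'rV[F]_n) :=
  linfun (colsub (fun j : 'I_n => inord j.+1 : 'I_(n.*2.+2))).
pose tl : 'Hom('rV[F]_(n.*2.+2), 'rV[F]_n) :=
  linfun (colsub (fun j : 'I_n => inord (n.*2 - j) : 'I_(n.*2.+2))).
have hdE x (j : 'I_n) : hd x 0 j = Xc x j.+2 by rewrite lfunE /= mxE.
have tlE x (j : 'I_n) : tl x 0 j = Xc x (n.*2.+1 - j).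
  by rewrite lfunE /= mxE /Xc; congr (x 0 (inord _)); lia.
set A := (T :&: lker hd)%VS.
have memA a : a \in A -> [/\ a \in T, forall i, (0 < i < n.+2)%N -> Xc a i = 0
                                    & Xc a (n.*2.+2) = 0].
  rewrite memv_cap memv_ker => /andP[aT /eqP hd_a].
  have a_mid i : (1 < i < n.+2)%N -> Xc a i = 0.
    move=> i_mid; have ij : (i - 2 < n)%N by lia.
    by have := hdE a (Ordinal ij); rewrite hd_a mxE /= (_ : (i - 2).+2 = i) //; lia.
  have [a1 a_last] := Qform0_head_eq0 (T_sing a aT) a_mid.
  split=> // i /andP[i0 i_lt]; have [->|] := eqVneq i 1%N; first exact: a1.
  by move=> i1; apply: a_mid; lia.
have tl_inj : (A :&: lker tl = 0)%VS.
  apply/eqP; rewrite -subv0; apply/subvP => a.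
  rewrite memv_cap memv_ker memv0 => /andP[/memA[_ a_head a_last] /eqP tl_a].
  apply/eqP/Xc_inj => i /andP[i0 i_le]; rewrite Xc0.
  have [i_lt|i_ge] := ltnP i n.+2; first by rewrite a_head // i0.
  have [->|i_last] := eqVneq i (n.*2.+2); first exact: a_last.
  have ij : (n.*2.+1 - i < n)%N by lia.
  by have := tlE a (Ordinal ij); rewrite tl_a mxE /= (_ : _ - _ = i)%N //; lia.
have dimT := limg_ker_dim hd T.
have := limg_ker_dim tl A; rewrite tl_inj dimv0 add0n => dimA.
rewrite -dimT -/A -dimA addnC dimv_orthogonal //.
move=> _ _ /memv_imgP[t tT ->] /memv_imgP[a aA ->].
have [aT a_head a_last] := memA a aA.
have B_ta : Bform n 0 t a = 0.
  by have := QformD hchar delta 0 t a; rewrite !T_sing ?memvD // !add0r => <-.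
rewrite -[RHS]B_ta Bform0_tail //.
by apply: eq_bigr => j _; rewrite tlE hdE.
Qed.

End WittIndex.

Section Delta.
Variables (F : fieldType) (n : nat).
Hypothesis n_gt0 : (0 < n)%N.
Implicit Types (x : 'rV[F]_(n.*2.+2)) (g : {vspace 'rV[F]_(n.*2.+2)}).

Lemma memDelta x :
  (x \in Delta F n) = (Xc x (n.*2) == 0) && (Xc x (n.*2.+1) == 0).
Proof.
apply/idP/andP => [|[/eqP x2n /eqP x2n1]].
  move=> xD; move: x xD; apply: span_ind => [|x y [x1 x2] [y1 y2]|c x [x1 x2]|].
  - by rewrite !Xc0.
  - by rewrite !XcD (eqP x1) (eqP x2) (eqP y1) (eqP y2) addr0.
  - by rewrite !XcZ (eqP x1) (eqP x2) mulr0.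
  move=> ? /mapP[j]; rewrite mem_filter mem_enum andbT => /andP[j1 j2] ->.
  rewrite /Xc !mxE !eqxx /=; split; apply/eqP; rewrite (_ : _ == j = false) //.
    by apply/negbTE; apply: contra j1 => /eqP <-; rewrite /= inordK //; lia.
  by apply/negbTE; apply: contra j2 => /eqP <-; rewrite /= inordK //; lia.
rewrite [x]row_sum_delta; apply: memv_suml => j _.
have [j_off|] := boolP ((val j != (n.*2).-1) && (val j != n.*2)).
  by apply/memvZ/memv_span/mapP; exists j; rewrite // mem_filter j_off mem_enum.
rewrite negb_and !negbK => /orP[] /eqP j_val; rewrite (_ : x 0 j = 0) ?scale0r ?mem0v //.
  by rewrite -x2n /Xc; congr (x 0 _); apply: val_inj; rewrite /= inordK; [exact: j_val | lia].
by rewrite -x2n1 /Xc; congr (x 0 _); apply: val_inj; rewrite /= inordK; [exact: j_val | lia].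
Qed.

Lemma generator_Delta_onto g (a b : F) :
  \dim g = n.+1 -> \dim (g :&: Delta F n) = n.-1 ->
  exists2 p, p \in g & Xc p (n.*2) = a /\ Xc p (n.*2.+1) = b.
Proof.
move=> dim_g dim_gD.
pose pr : 'Hom('rV[F]_(n.*2.+2), 'rV[F]_2) :=
  linfun (colsub (fun j : 'I_2 => inord (n.*2.-1 + j) : 'I_(n.*2.+2))).
have pr_fst x : pr x 0 0 = Xc x (n.*2).
  by rewrite lfunE /= mxE /Xc; congr (x 0 (inord _)); rewrite /=; lia.
have pr_snd x : pr x 0 1 = Xc x (n.*2.+1).
  by rewrite lfunE /= mxE /Xc; congr (x 0 (inord _)); rewrite /=; lia.
have pr0 x : (pr x == 0) = (Xc x (n.*2) == 0) && (Xc x (n.*2.+1) == 0).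
  rewrite -pr_fst -pr_snd; apply/eqP/andP => [->|[/eqP x0 /eqP x1]]; first by rewrite !mxE.
  apply/rowP => -[[|[|//]] j2]; rewrite mxE; [rewrite -x0 | rewrite -x1];
    by congr (pr x 0 _); apply: val_inj.
have ker_pr : lker pr = Delta F n by apply/vspaceP => x; rewrite memv_ker pr0 memDelta.
have := limg_ker_dim pr g; rewrite ker_pr dim_gD dim_g => dim_img.
have /memv_imgP[p pg p_ab] : \row_(j < 2) [:: a; b]`_j \in (pr @: g)%VS.
  suff -> : (pr @: g)%VS = fullv by rewrite memvf.
  by apply/eqP; rewrite eqEdim subvf dimvf dim_matrix mul1r /=; lia.
by exists p; rewrite // -pr_fst -pr_snd -p_ab !mxE.
Qed.

Lemma memv_capDelta g x : (x \in (g :&: Delta F n)%VS) =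
  [&& x \in g, Xc x (n.*2) == 0 & Xc x (n.*2.+1) == 0].
Proof. by rewrite memv_cap memDelta. Qed.

End Delta.

Section Generator.
Variables (F : fieldType) (n : nat) (delta : F).
Hypotheses (hchar : (2 \in [pchar F])%N) (n_gt1 : (1 < n)%N)
           (hdelta : irreducible_poly ('X^2 + 'X + delta%:P : {poly F})).
Variable g : {vspace 'rV[F]_(n.*2.+2)}.
Hypotheses (g_iso : {in g &, forall x y, Bform n 0 x y = 0})
           (dim_gD : \dim (g :&: Delta F n) = n.-1).
Variables p r : 'rV[F]_(n.*2.+2).
Hypotheses (pg : p \in g) (rg : r \in g)
  (p2n : Xc p (n.*2) = 1) (p2n1 : Xc p (n.*2.+1) = 0)
  (r2n : Xc r (n.*2) = 0) (r2n1 : Xc r (n.*2.+1) = 1).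

Let n_gt0 : (0 < n)%N := ltnW n_gt1.
Let K := (g :&: Delta F n)%VS.

Lemma Delta_not_totally_singular : ~ {in K, forall x, Qform n delta 0 x = 0}.
Proof.
move=> K_sing.
pose w a b : 'rV[F]_(n.*2.+2) := a *: unitv F n 2 + b *: unitv F n 3.
have Bw y a b : Bform n 0 y (w a b) = a * Xc y (n.*2.+1) + b * Xc y (n.*2).
  rewrite Bform0C Bform0Dl !Bform0Zl !Bform0_unitvl ?subSS ?subn0 //; lia.
have w_sing a b : Qform n delta 0 (w a b) = 0.
  rewrite QformD // !QformZ !Qform0_unitv; [|lia|lia].
  rewrite Bform0Zl Bform0C Bform0Zl Bform0_unitvl; last by lia.
  rewrite Xc_unitv; [|lia|lia].
  have /negbTE -> : 2 != (n.*2.+3 - 3)%N by apply/eqP; lia.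
  by rewrite !mulr0 !addr0.
set W := (<[unitv F n 2]> + <[unitv F n 3]>)%VS.
have memW x : x \in W -> exists a b, x = w a b.
  by case/memv_addP => _ /vlineP[a ->] [_ /vlineP[b ->] ->]; exists a, b.
have KW_sing : {in (K + W)%VS, forall t, Qform n delta 0 t = 0}.
  move=> _ /memv_addP[k kK [_ /memW[a [b ->]] ->]].
  move: (kK); rewrite (memv_capDelta n_gt0) => /and3P[_ /eqP k1 /eqP k2].
  by rewrite QformD // K_sing // w_sing Bw k1 k2 !mulr0 !addr0.
have KW0 : (K :&: W = 0)%VS.
  apply/eqP; rewrite -subv0; apply/subvP => x.
  rewrite memv_cap memv0 (memv_capDelta n_gt0) => /andP[/and3P[xg _ _] /memW[a [b x_ab]]].
  have := g_iso pg xg; have := g_iso rg xg.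
  rewrite x_ab !Bw p2n p2n1 r2n r2n1 !mulr0 !mulr1 add0r addr0 => -> ->.
  by rewrite /w !scale0r addr0.
have dimW : \dim W = 2%N by apply: dim_unitv_pair; lia.
have := totally_singular_dim_le hchar hdelta KW_sing.
by have := dimv_sum_cap K W; rewrite KW0 dimv0 addn0 dimW dim_gD; lia.
Qed.

End Generator.

Section Cone.
Variables (F : finFieldType) (n : nat) (delta mu : F).
Hypotheses (hchar : (2 \in [pchar F])%N) (n_gt1 : (1 < n)%N) (mu_neq0 : mu != 0).
Variable g : {vspace 'rV[F]_(n.*2.+2)}.
Hypotheses (g_iso : {in g &, forall x y, Bform n 0 x y = 0})
           (dim_g : \dim g = n.+1) (dim_gD : \dim (g :&: Delta F n) = n.-1).
Variables p r u : 'rV[F]_(n.*2.+2).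
Hypotheses (pg : p \in g) (rg : r \in g)
  (p2n : Xc p (n.*2) = 1) (p2n1 : Xc p (n.*2.+1) = 0)
  (r2n : Xc r (n.*2) = 0) (r2n1 : Xc r (n.*2.+1) = 1)
  (uK : u \in (g :&: Delta F n)%VS) (Qu : Qform n delta 0 u != 0).
Implicit Types (x y v w : 'rV[F]_(n.*2.+2)).

Let K := (g :&: Delta F n)%VS.
Let n_gt0 : (0 < n)%N := ltnW n_gt1.
Let memK := memv_capDelta n_gt0 g.
Let Kg x : x \in K -> x \in g := subvP (capvSl g _) x.

Definition cone_vertex : {vspace 'rV[F]_(n.*2.+2)} :=
  <<[seq y <- enum 'rV[F]_(n.*2.+2) | (y \in K) && (Qform n delta 0%R y == 0%R)]>>%VS.

Definition conic_plane : {vspace 'rV[F]_(n.*2.+2)} := <<[:: u; p; r]>>%VS.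

Lemma QformD_iso (m : F) x y : x \in g -> y \in g -> Qform n delta m (x + y) =
  Qform n delta m x + Qform n delta m y
  + m * (Xc x (n.*2) * Xc y (n.*2.+1) + Xc x (n.*2.+1) * Xc y (n.*2)).
Proof. by move=> xg yg; rewrite QformD // BformE g_iso // add0r. Qed.

Lemma Qform0D_iso x y : x \in g -> y \in g ->
  Qform n delta 0 (x + y) = Qform n delta 0 x + Qform n delta 0 y.
Proof. by move=> xg yg; rewrite QformD_iso // mul0r addr0. Qed.

Lemma mem_cone_vertex y : (y \in cone_vertex) = (y \in K) && (Qform n delta 0 y == 0).
Proof.
apply/idP/idP => [|y_sing]; last by apply: memv_span; rewrite mem_filter y_sing mem_enum.
move: y; apply: span_ind => [|x y /andP[xK /eqP Qx] /andP[yK /eqP Qy]|c x /andP[xK /eqP Qx]|].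
- by rewrite mem0v Qform0 eqxx.
- by rewrite memvD // Qform0D_iso ?Qx ?Qy ?addr0 ?eqxx // Kg.
- by rewrite memvZ // QformZ Qx mulr0 eqxx.
- by move=> x; rewrite mem_filter => /andP[].
Qed.

Lemma cone_vertex_complement x : x \in K ->
  exists c, x - c *: u \in cone_vertex.
Proof.
move=> xK; have [c c2] := finField_pchar2_sqrt (Qform n delta 0 x / Qform n delta 0 u) hchar.
exists c; rewrite mem_cone_vertex memvB ?memvZ //=.
by rewrite -scaleNr Qform0D_iso ?memvZ ?Kg // QformZ sqrrN c2 divfK // addrr_pchar2.
Qed.

Lemma dim_cone_vertex : \dim cone_vertex = (n - 2)%N.
Proof.
have u_neq0 : u != 0 by apply: contraNneq Qu => ->; rewrite Qform0.
have VuK : (cone_vertex + <[u]> = K)%VS.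
  apply/vspaceP => x; apply/memv_addP/idP => [[v + [_ /vlineP[c ->] ->]]|xK].
    by rewrite mem_cone_vertex => /andP[vK _]; rewrite rpredD // memvZ.
  have [c xcu] := cone_vertex_complement xK.
  by exists (x - c *: u); last exists (c *: u); rewrite ?subrK ?memvZ ?memv_line.
have Vu0 : (cone_vertex :&: <[u]> = 0)%VS.
  apply/eqP; rewrite -subv0; apply/subvP => x; rewrite memv_cap memv0 mem_cone_vertex.
  case/andP => /andP[_ /eqP Qx] /vlineP[c x_cu]; move: Qx.
  rewrite x_cu QformZ => /eqP; rewrite mulf_eq0 (negbTE Qu) orbF sqrf_eq0.
  by move/eqP->; rewrite scale0r.
have := dimv_sum_cap cone_vertex <[u]>; rewrite VuK Vu0 dimv0 addn0 dim_vline u_neq0 dim_gD.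
by rewrite subn2 addn1 => ->.
Qed.

Let u2n : Xc u (n.*2) = 0.
Proof. by move: uK; rewrite memK => /and3P[_ /eqP]. Qed.

Let u2n1 : Xc u (n.*2.+1) = 0.
Proof. by move: uK; rewrite memK => /and3P[_ _ /eqP]. Qed.

Lemma Xc_conic_plane a b c :
  Xc (a *: u + b *: p + c *: r) (n.*2) = b /\ Xc (a *: u + b *: p + c *: r) (n.*2.+1) = c.
Proof. by rewrite !XcD !XcZ u2n u2n1 p2n p2n1 r2n r2n1; split; ring. Qed.

Lemma conic_plane_sub : (conic_plane <= g)%VS.
Proof. by apply/subvP => w /span3P[a [b [c ->]]]; rewrite !memvD // memvZ // Kg. Qed.

Lemma Qform_cone_vertexD v w : v \in cone_vertex -> w \in g ->
  Qform n delta mu (v + w) = Qform n delta mu w.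
Proof.
rewrite mem_cone_vertex memK => /andP[/and3P[vg /eqP v2n /eqP v2n1] /eqP Qv] wg.
by rewrite QformD_iso // QformE Qv v2n v2n1; ring.
Qed.

Lemma cone_vertex_conic_plane_direct : directv (cone_vertex + conic_plane).
Proof.
apply/directv_addP/eqP; rewrite -subv0; apply/subvP => w; rewrite memv_cap memv0.
case/andP; rewrite mem_cone_vertex memK => /andP[/and3P[_ /eqP w2n /eqP w2n1] /eqP Qw].
case/span3P=> a [b [c w_abc]]; subst w; move: w2n w2n1 Qw.
have [-> ->] := Xc_conic_plane a b c => -> ->.
rewrite !scale0r !addr0 QformZ => /eqP; rewrite mulf_eq0 (negbTE Qu) orbF sqrf_eq0.
by move/eqP->; rewrite scale0r.
Qed.

Lemma cone_vertex_conic_plane_decomp x : x \in g ->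
  exists v w, [/\ v \in cone_vertex, w \in conic_plane & x = v + w].
Proof.
move=> xg; set b := Xc x (n.*2); set c := Xc x (n.*2.+1).
have [a xa] : exists a, x - b *: p - c *: r - a *: u \in cone_vertex.
  apply: cone_vertex_complement; rewrite memK !memvB ?memvZ //=.
  by rewrite !XcD !XcN !XcZ p2n p2n1 r2n r2n1 /b /c !mulr1 !mulr0 !subr0 !subrr eqxx.
exists (x - b *: p - c *: r - a *: u), (a *: u + b *: p + c *: r); split=> //.
  by apply/span3P; exists a, b, c.
by apply/rowP => k; rewrite !mxE; ring.
Qed.

Lemma cone_vertex_conic_plane_sum : (cone_vertex + conic_plane = g)%VS.
Proof.
apply/vspaceP => x; apply/memv_addP/idP => [[v vV [w wpi ->]]|xg].
  move: vV; rewrite mem_cone_vertex => /andP[/Kg vg _].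
  by rewrite memvD // (subvP conic_plane_sub).
by have [v [w [vV wpi ->]]] := cone_vertex_conic_plane_decomp xg; exists v => //; exists w.
Qed.

Lemma dim_conic_plane : \dim conic_plane = 3%N.
Proof.
have := cone_vertex_conic_plane_direct; rewrite directvE /= cone_vertex_conic_plane_sum.
rewrite dim_g dim_cone_vertex => /eqP dim_sum.
by apply/eqP; rewrite -(eqn_add2l (n - 2)) -dim_sum addnS subnK.
Qed.

Lemma polarQ_iso w w' : w \in g -> w' \in g -> polarQ (Qform n delta mu) w w' =
  mu * (Xc w (n.*2) * Xc w' (n.*2.+1) + Xc w (n.*2.+1) * Xc w' (n.*2)).
Proof. by move=> wg w'g; rewrite /polarQ QformD_iso //; ring. Qed.

Lemma conic_plane_nondeg : nondeg_conic_in (Qform n delta mu) conic_plane.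
Proof.
split=> [|w /[dup] wpi /span3P[a [b [c w_abc]]] Qw w_rad]; first exact: dim_conic_plane.
have [w2n w2n1] := Xc_conic_plane a b c; rewrite -w_abc in w2n w2n1.
have /w_rad : p \in conic_plane by apply: memv_span; rewrite !inE eqxx orbT.
have /w_rad : r \in conic_plane by apply: memv_span; rewrite !inE eqxx !orbT.
have wg := subvP conic_plane_sub _ wpi.
rewrite !polarQ_iso // w2n w2n1 p2n p2n1 r2n r2n1 !mulr0 !mulr1 add0r addr0.
move=> /eqP; rewrite mulf_eq0 (negbTE mu_neq0) => /eqP b0.
move=> /eqP; rewrite mulf_eq0 (negbTE mu_neq0) => /eqP c0.
move: Qw; rewrite w_abc b0 c0 !scale0r !addr0 QformZ QformE u2n u2n1.
rewrite (_ : mu * _ = 0) ?addr0; last by ring.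
move=> /eqP; rewrite mulf_eq0 (negbTE Qu) orbF sqrf_eq0 => /eqP->.
by rewrite scale0r.
Qed.

Lemma cone_in_generator : is_cone_in (Qform n delta mu) g cone_vertex conic_plane.
Proof.
split; first exact: cone_vertex_conic_plane_direct.
split; first exact: cone_vertex_conic_plane_sum.
move=> x xg; split=> [Qx|[v [w [vV wpi Qw ->]]]].
  have [v [w [vV wpi x_vw]]] := cone_vertex_conic_plane_decomp xg.
  by exists v, w; rewrite -(Qform_cone_vertexD vV) ?(subvP conic_plane_sub) // -x_vw.
by rewrite Qform_cone_vertexD // (subvP conic_plane_sub).
Qed.

End Cone.

Unset Implicit Arguments.

Theorem mainTheorem5 (F : finFieldType) (n : nat) (delta mu : F)
  (hchar : (2 \in [pchar F])%N)
  (hn : (2 <= n)%N)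
  (hdelta : irreducible_poly ('X^2 + 'X + delta%:P : {poly F}))
  (hmu : mu != 0)
  (g : {vspace 'rV[F]_(n.*2.+2)})
  (hg : is_generator n 0 g)
  (hgD : \dim (g :&: Delta F n) = n.-1) :
  exists V pi : {vspace 'rV[F]_(n.*2.+2)},
    \dim V = (n - 2)%N /\
    nondeg_conic_in (Qform n delta mu) pi /\
    is_cone_in (Qform n delta mu) g V pi.
Proof.
have [dim_g g_iso] := hg.
have [p pg [p2n p2n1]] := generator_Delta_onto (ltnW hn) 1 0 dim_g hgD.
have [r rg [r2n r2n1]] := generator_Delta_onto (ltnW hn) 0 1 dim_g hgD.
have [u uK Qu] : exists2 u, u \in (g :&: Delta F n)%VS & Qform n delta 0 u != 0.
  case: (pickP [pred u | (u \in g :&: Delta F n)%VS && (Qform n delta 0 u != 0)]).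
    by move=> u /andP[]; exists u.
  move=> K_sing.
  case: (Delta_not_totally_singular hchar hn hdelta g_iso hgD pg rg p2n p2n1 r2n r2n1).
  by move=> x xK; have /= := K_sing x; rewrite xK => /negbFE/eqP.
exists (cone_vertex delta g), (conic_plane p r u); split; last split.
- apply: (dim_cone_vertex hchar g_iso hgD uK Qu).
- apply: (conic_plane_nondeg hchar hn hmu g_iso dim_g hgD pg rg p2n p2n1 r2n r2n1 uK Qu).
- apply: (cone_in_generator mu hchar hn g_iso pg rg p2n p2n1 r2n r2n1 uK Qu).
Qed.
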